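(* Let $\tau,\nu$ be complex $n\times n$ matrices and $0\le\eta\le n$. Then, with all indices summed over $\{0,\dots,n-1\}$: 1. $\big\|\sum_{j,k,m}\tau_{j,k}\nu_{k,m}A_j^\dagger N_mA_k\big\|_\eta\le\|\tau\|\|\nu\|_{\max}\eta^2$; 2. $\big\|\sum_{j,k}\tau_{j,k}\nu_{k,k}A_j^\dagger A_k\big\|_\eta\le\|\tau\|\|\nu\|_{\max}\eta$; 3. $\big\|\sum_{j,k,l}\tau_{j,k}\nu_{l,k}A_j^\dagger N_lA_k\big\|_\eta\le\|\tau\|\|\nu\|_{\max}\eta^2$; 4. $\big\|\sum_{j,k,m}\tau_{j,k}\nu_{j,m}A_j^\dagger N_mA_k\big\|_\eta\le\|\tau\|\|\nu\|_{\max}\eta^2$; 5. $\big\|\sum_{j,k}\tau_{j,k}\nu_{j,j}A_j^\dagger A_k\big\|_\eta\le\|\tau\|\|\nu\|_{\max}\eta$; 6. $\big\|\sum_{j,k,l}\tau_{j,k}\nu_{l,j}A_j^\dagger N_l A_k\big\|_\eta\le\|\tau\|\|\nu\|_{\max}\eta^2$.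
   Context: Fermionic Fock space on $n$ spin orbitals: the $2^n$-dimensional Hilbert space with orthonormal basis $|c_0,\dots,c_{n-1}\rangle$, $c_j\in\{0,1\}$, with creation operators $A_j^\dagger|\dots,0_j,\dots\rangle=(-1)^{\sum_{k<j}c_k}|\dots,1_j,\dots\rangle$, $A_j^\dagger|\dots,1_j,\dots\rangle=0$, annihilation operators $A_j=(A_j^\dagger)^\dagger$, $N_j=A_j^\dagger A_j$, $N=\sum_jN_j$. The $\eta$-electron subspace is spanned by basis vectors with $\sum_jc_j=\eta$; $\eta$-electron states are unit vectors in it. For an operator $X$ commuting with $N$, $\|X\|_\eta=\max|\langle\phi_\eta|X|\psi_\eta\rangle|$ over $\eta$-electron states. $\|\tau\|$ is the spectral norm and $\|\nu\|_{\max}=\max_{l,m}|\nu_{l,m}|$. *)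

From HB Require Import structures.
From mathcomp Require Import all_boot all_order all_algebra.
From mathcomp Require Import complex.
From mathcomp Require Import boolp classical_sets reals.
Set Implicit Arguments. Unset Strict Implicit. Unset Printing Implicit Defensive.
Import Order.TTheory GRing.Theory Num.Theory.
Local Open Scope ring_scope.
Local Open Scope classical_set_scope.

Section Fock.
Variable R : realType.
Local Notation C := R[i].
Local Open Scope complex_scope.

Definition cabs (z : C) : R := Normc.normc z.

Definition vnorm2 n (v : 'cV[C]_n) : R := Num.sqrt (\sum_i cabs (v i 0) ^+ 2).
Definition spec_norm n (tau : 'M[C]_n) : R :=
  sup [set r : R | exists v : 'cV[C]_n, vnorm2 v = 1 /\ r = vnorm2 (tau *m v)].

Definition max_norm n (nu : 'M[C]_n) : R :=
  \big[Num.max/0]_(l < n) \big[Num.max/0]_(m < n) cabs (nu l m).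

(** Fock space on n spin orbitals: basis vectors |c_0..c_{n-1}> indexed by
    occupation configurations c : 'I_n -> bool; a vector is a function
    from configurations to C; an operator is given by its matrix
    elements  X c d = <c| X |d>. *)
Definition config n := {ffun 'I_n -> bool}.
Definition fvec n := config n -> C.
Definition fop n := config n -> config n -> C.

Definition apply_op n (X : fop n) (psi : fvec n) : fvec n :=
  fun c => \sum_(d : config n) X c d * psi d.
Definition comp_op n (X Y : fop n) : fop n :=
  fun c e => \sum_(d : config n) X c d * Y d e.
Definition adj_op n (X : fop n) : fop n := fun c d => (X d c)^*.
Definition inner n (phi psi : fvec n) : C := \sum_(c : config n) (phi c)^* * psi c.

Definition nbefore n (c : config n) (j : 'I_n) : nat :=
  #|[set k : 'I_n | (k < j)%N && c k]|.

(** creation operator A_j^dagger : |.., 0_j, ..> |-> (-1)^{sum_{k<j} c_k} |.., 1_j, ..>,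
    and |.., 1_j, ..> |-> 0. Matrix element <c| A_j^dag |d>. *)
Definition Adag n (j : 'I_n) : fop n := fun c d =>
  if [&& c j, ~~ d j & [forall k, (k != j) ==> (c k == d k)]]
  then (-1) ^+ nbefore d j else 0.
Definition Aop n (j : 'I_n) : fop n := adj_op (Adag j).
Definition Nop n (j : 'I_n) : fop n := comp_op (Adag j) (Aop j).

Definition sum_op n (I : finType) (F : I -> fop n) : fop n :=
  fun c d => \sum_(i : I) F i c d.
Definition scale_op n (a : C) (X : fop n) : fop n := fun c d => a * X c d.

Definition nelec n (c : config n) : nat := #|[set j | c j]|.
Definition eta_state n (eta : nat) (psi : fvec n) : Prop :=
  (forall c, nelec c != eta -> psi c = 0) /\ inner psi psi = 1.

Definition eta_norm n (X : fop n) (eta : nat) : R :=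
  sup [set r : R | exists phi psi : fvec n,
         [/\ eta_state eta phi, eta_state eta psi &
             r = cabs (inner phi (apply_op X psi))]].

End Fock.

Arguments Adag {R n} j.
Arguments Aop {R n} j.
Arguments Nop {R n} j.

From HB Require Import structures.
From mathcomp Require Import all_boot all_order all_algebra.
From mathcomp Require Import complex.
From mathcomp Require Import boolp classical_sets reals.
From mathcomp Require Import ring lra.
Set Implicit Arguments. Unset Strict Implicit. Unset Printing Implicit Defensive.
Import Order.TTheory GRing.Theory Num.Theory.
Local Open Scope ring_scope.

(** Inserting a resolution of the identity between A_j^dagger and A_k, each of the
    six matrix elements between eta-electron states takes the form
      <phi|X|psi> = sum_e sum_(j,k) (A_j phi)(e)^* p_j(e) tau_(j,k) q_k(e) (A_k psi)(e),
    where one weight is 1 and the other is a diagonal entry of nu or a row or column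
    of nu summed against the occupations e_m.  Only (eta-1)-electron configurations e
    contribute, so the weights are bounded by P, Q with P Q = ||nu||_max or
    ||nu||_max eta.  For fixed e the sum over (j,k) is a bilinear form
    <U_e, tau V_e> <= ||tau|| |U_e| |V_e|, and Cauchy-Schwarz in e together with
    sum_(j,e) |(A_j phi)(e)|^2 = <phi|N|phi> = eta gives the bound ||tau|| P Q eta. *)

Lemma sum_CauchySchwarz (R : realFieldType) (I : finType) (a b : I -> R) :
  (\sum_i a i * b i) ^+ 2 <= (\sum_i a i ^+ 2) * (\sum_i b i ^+ 2).
Proof.
set A := \sum_i a i ^+ 2; set B := \sum_i b i ^+ 2; set S := \sum_i a i * b i.
have AB_l : A * B = \sum_i \sum_j a i ^+ 2 * b j ^+ 2.
  by rewrite mulr_suml; apply: eq_bigr => i _; rewrite mulr_sumr.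
have AB_r : A * B = \sum_i \sum_j a j ^+ 2 * b i ^+ 2.
  rewrite mulrC mulr_suml; apply: eq_bigr => i _; rewrite mulr_sumr.
  by apply: eq_bigr => j _; rewrite mulrC.
have S2 : S ^+ 2 = \sum_i \sum_j (a i * b i) * (a j * b j).
  by rewrite expr2 mulr_suml; apply: eq_bigr => i _; rewrite mulr_sumr.
have Lagrange : A * B + A * B - (S ^+ 2 + S ^+ 2) =
    \sum_i \sum_j (a i * b j - a j * b i) ^+ 2.
  rewrite {1}AB_l AB_r S2 -!big_split -sumrB /=; apply: eq_bigr => i _.
  by rewrite -!big_split -sumrB /=; apply: eq_bigr => j _; ring.
have : 0 <= A * B + A * B - (S ^+ 2 + S ^+ 2).
  by rewrite Lagrange; do 2!(apply: sumr_ge0 => ? _); apply: sqr_ge0.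
lra.
Qed.

Lemma sum_CauchySchwarz_sqrt (R : rcfType) (I : finType) (a b : I -> R) :
  \sum_i a i * b i <= Num.sqrt (\sum_i a i ^+ 2) * Num.sqrt (\sum_i b i ^+ 2).
Proof.
rewrite -sqrtrM; last by apply: sumr_ge0 => i _; apply: sqr_ge0.
apply: le_trans (ler_norm _) _; rewrite -sqrtr_sqr.
exact/ler_wsqrtr/sum_CauchySchwarz.
Qed.

Section Modulus.
Variable R : realType.
Local Notation C := R[i].
Local Open Scope complex_scope.

Lemma normr_cabs (z : C) : `|z| = (cabs z)%:C.
Proof. by []. Qed.

Lemma cabs_ge0 (z : C) : 0 <= cabs z.
Proof. by case: z => a b; rewrite /cabs /= sqrtr_ge0. Qed.

Lemma cabs0 : cabs (0 : C) = 0. Proof. exact: Normc.normc0. Qed.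
Lemma cabs1 : cabs (1 : C) = 1. Proof. exact: Normc.normc1. Qed.
Lemma cabsM (x y : C) : cabs (x * y) = cabs x * cabs y. Proof. exact: Normc.normcM. Qed.

Lemma cabsJ (x : C) : cabs x^*%R = cabs x.
Proof. by apply: complexI; rewrite -!normr_cabs norm_conjC. Qed.

Lemma cabs_sign k : cabs ((-1) ^+ k : C) = 1.
Proof.
elim: k => [|k IH]; first exact: cabs1.
by rewrite exprS cabsM IH mulr1 -cabs1; apply: normcN.
Qed.

Lemma cabsR (r : R) : cabs r%:C = `|r|.
Proof. by rewrite /cabs /= expr0n /= addr0 sqrtr_sqr. Qed.

Lemma cabs_sqr (x : C) : (cabs x ^+ 2)%:C = x * x^*%R.
Proof. by rewrite rmorphXn /= -normr_cabs normCK. Qed.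

Lemma cabs_sum (I : finType) (F : I -> C) : cabs (\sum_i F i) <= \sum_i cabs (F i).
Proof.
have := ler_norm_sum (index_enum I) F xpredT.
rewrite normr_cabs; under [X in _ <= X]eq_bigr do rewrite normr_cabs.
by rewrite -rmorph_sum lecR.
Qed.

Lemma cabs_sum_mul_sqr (I : finType) (x y : I -> C) :
  cabs (\sum_i x i * y i) ^+ 2 <= (\sum_i cabs (x i) ^+ 2) * (\sum_i cabs (y i) ^+ 2).
Proof.
apply: le_trans _ (sum_CauchySchwarz (fun i => cabs (x i)) (fun i => cabs (y i))).
rewrite ler_sqr ?nnegrE ?cabs_ge0 ?sumr_ge0 // => [|i _]; last first.
  by rewrite mulr_ge0 ?cabs_ge0.
by under [X in _ <= X]eq_bigr do rewrite -cabsM; apply: cabs_sum.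
Qed.

Lemma cabs_sum_mul_le (I : finType) (x y : I -> C) :
  cabs (\sum_i x i * y i) <=
  Num.sqrt (\sum_i cabs (x i) ^+ 2) * Num.sqrt (\sum_i cabs (y i) ^+ 2).
Proof.
have sum_sqr_ge0 (F : I -> C) : 0 <= \sum_i cabs (F i) ^+ 2.
  by apply: sumr_ge0 => i _; apply: sqr_ge0.
rewrite -sqrtrM // -[cabs _]ger0_norm ?cabs_ge0 // -sqrtr_sqr ler_sqrt.
  exact: cabs_sum_mul_sqr.
by rewrite mulr_ge0.
Qed.

End Modulus.

Section MatrixNorms.
Variables (R : realType) (n : nat).
Local Notation C := R[i].
Local Open Scope classical_set_scope.
Local Open Scope complex_scope.

Lemma ge0_ge_sup (E : set R) (b : R) : 0 <= b -> ubound E b -> sup E <= b.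
Proof.
move=> b0 Eb; have [E_ne0|E0] := pselect (E !=set0); first exact: ge_sup.
by rewrite (_ : E = set0) ?sup0 //; apply/seteqP; split=> x // Ex; apply: E0; exists x.
Qed.

Lemma vnorm2_ge0 (v : 'cV[C]_n) : 0 <= vnorm2 v.
Proof. exact: sqrtr_ge0. Qed.

Lemma vnorm2_sqr (v : 'cV[C]_n) : vnorm2 v ^+ 2 = \sum_i cabs (v i 0) ^+ 2.
Proof. by rewrite sqr_sqrtr // sumr_ge0 // => i _; apply: sqr_ge0. Qed.

Lemma vnorm2Z (a : C) (v : 'cV[C]_n) : vnorm2 (a *: v) = cabs a * vnorm2 v.
Proof.
rewrite /vnorm2 -[cabs a]ger0_norm ?cabs_ge0 // -sqrtr_sqr -sqrtrM ?sqr_ge0 //.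
by rewrite mulr_sumr; congr Num.sqrt; apply: eq_bigr => i _; rewrite mxE cabsM exprMn.
Qed.

Lemma vnorm2_mulmx_Frobenius (tau : 'M[C]_n) (v : 'cV[C]_n) :
  vnorm2 (tau *m v) <= Num.sqrt (\sum_i \sum_j cabs (tau i j) ^+ 2) * vnorm2 v.
Proof.
rewrite /vnorm2 -sqrtrM; last by do 2!(apply: sumr_ge0 => ? _); apply: sqr_ge0.
rewrite ler_wsqrtr // mulr_suml; apply: ler_sum => i _; rewrite mxE.
exact: cabs_sum_mul_sqr.
Qed.

Lemma spec_norm_ge0 (tau : 'M[C]_n) : 0 <= spec_norm tau.
Proof.
rewrite /spec_norm; set S := [set _ | _].
have [sup_S|/sup_out ->//] := pselect (has_sup S).
case: (sup_S) => -[r Sr] _; apply: le_trans (sup_upper_bound sup_S Sr).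
by case: Sr => v [_ ->]; apply: vnorm2_ge0.
Qed.

Lemma vnorm2_mulmx_le (tau : 'M[C]_n) (v : 'cV[C]_n) :
  vnorm2 (tau *m v) <= spec_norm tau * vnorm2 v.
Proof.
have F_tau := vnorm2_mulmx_Frobenius tau; set F := Num.sqrt _ in F_tau.
have [v0|v_neq0] := eqVneq (vnorm2 v) 0.
  by rewrite v0 mulr0; apply: le_trans (F_tau v) _; rewrite v0 mulr0.
have v_gt0 : 0 < vnorm2 v by rewrite lt_def v_neq0 vnorm2_ge0.
pose c := (vnorm2 v)^-1.
have c_ge0 : 0 <= c by rewrite invr_ge0 vnorm2_ge0.
have unit_cv : vnorm2 (c%:C *: v) = 1 by rewrite vnorm2Z cabsR ger0_norm // mulVf.
have bounded : has_ubound [set r | exists w, vnorm2 w = 1 /\ r = vnorm2 (tau *m w)].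
  by exists F => _ [w [w1 ->]]; rewrite -[F]mulr1 -w1; apply: F_tau.
have := ub_le_sup bounded (ex_intro _ (c%:C *: v) (conj unit_cv erefl)).
by rewrite -scalemxAr vnorm2Z cabsR ger0_norm // mulrC ler_pdivrMr.
Qed.

Lemma max_norm_ge0 (nu : 'M[C]_n) : 0 <= max_norm nu.
Proof. exact: bigmax_ge_id. Qed.

Lemma max_norm_ge (nu : 'M[C]_n) l m : cabs (nu l m) <= max_norm nu.
Proof. by apply: le_trans (le_bigmax _ _ m) (le_bigmax _ _ l). Qed.

Lemma cabs_dot_mulmx_le (tau : 'M[C]_n) (I : finType) (U V : I -> 'cV[C]_n) :
  cabs (\sum_i \sum_j (U i j 0)^*%R * (tau *m V i) j 0) <=
  spec_norm tau * (Num.sqrt (\sum_i vnorm2 (U i) ^+ 2) *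
                   Num.sqrt (\sum_i vnorm2 (V i) ^+ 2)).
Proof.
apply: le_trans (cabs_sum _) _.
apply: le_trans (_ : \sum_i vnorm2 (U i) * (spec_norm tau * vnorm2 (V i)) <= _).
  apply: ler_sum => i _; apply: le_trans (cabs_sum_mul_le _ _) _.
  under eq_bigr do rewrite cabsJ.
  exact/ler_wpM2l/vnorm2_mulmx_le/vnorm2_ge0.
under eq_bigr do rewrite mulrCA.
by rewrite -mulr_sumr ler_wpM2l ?spec_norm_ge0 ?sum_CauchySchwarz_sqrt.
Qed.

End MatrixNorms.

Section FockOperators.
Variables (R : realType) (n : nat).
Local Notation C := R[i].

(* [adj_op] is written with [conjc] and [inner] with [Num.conj]. *)
Lemma conjcE (x : C) : conjc x = x^*.
Proof. by []. Qed.

Definition set_occ (e : config n) (j : 'I_n) (b : bool) : config n :=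
  [ffun k => if k == j then b else e k].

Lemma set_occE (e : config n) j b k : set_occ e j b k = if k == j then b else e k.
Proof. by rewrite ffunE. Qed.

Lemma set_occK (c : config n) j : c j -> set_occ (set_occ c j false) j true = c.
Proof. by move=> cj; apply/ffunP => k; rewrite !set_occE; case: eqP => [->|]. Qed.

Lemma eq_set_occ_true (c e : config n) j :
  (~~ e j && (c == set_occ e j true)) = (c j && (e == set_occ c j false)).
Proof.
apply/andP/andP => [[ej /eqP ->]|[cj /eqP ->]]; split; rewrite ?set_occE ?eqxx //.
  by apply/eqP/ffunP => k; rewrite !set_occE; case: eqP => [->|]; rewrite ?(negbTE ej).
by rewrite set_occK.
Qed.

Lemma AdagE j (c d : config n) : Adag j c d =
  if ~~ d j && (c == set_occ d j true) then (-1) ^+ nbefore d j else 0 :> C.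
Proof.
rewrite /Adag; congr (if _ then _ else _).
apply/and3P/andP => [[cj dj /forallP c_d]|[dj /eqP ->]].
  split=> //; apply/eqP/ffunP => k; rewrite set_occE; case: eqP => [->//|/eqP kj].
  by apply/eqP; have := c_d k; rewrite kj.
split; rewrite ?set_occE ?eqxx //.
by apply/forallP => k; apply/implyP => kj; rewrite set_occE (negbTE kj).
Qed.

Lemma apply_Aop j (phi : fvec R n) e : apply_op (Aop j) phi e =
  if e j then 0 else (-1) ^+ nbefore e j * phi (set_occ e j true).
Proof.
rewrite /apply_op /Aop /adj_op; under eq_bigr do rewrite AdagE conjcE.
case: (boolP (e j)) => ej.
  by rewrite big1 // => d _; rewrite andFb conjC0 mul0r.
under eq_bigr do rewrite andTb.
rewrite (bigD1 (set_occ e j true)) //= eqxx big1 ?addr0 => [|d /negbTE->].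
  by rewrite rmorphXn rmorphN1.
by rewrite conjC0 mul0r.
Qed.

Lemma apply_Adag j (chi : fvec R n) c : apply_op (Adag j) chi c =
  if c j then (-1) ^+ nbefore (set_occ c j false) j * chi (set_occ c j false) else 0.
Proof.
rewrite /apply_op; under eq_bigr do rewrite AdagE eq_set_occ_true.
case: (boolP (c j)) => cj /=; last by rewrite big1 // => d _; rewrite mul0r.
rewrite (bigD1 (set_occ c j false)) //= eqxx big1 ?addr0 // => d /negbTE->.
exact: mul0r.
Qed.

Lemma apply_comp_op (X Y : fop R n) psi c :
  apply_op (comp_op X Y) psi c = apply_op X (apply_op Y psi) c.
Proof.
rewrite /apply_op /comp_op; under eq_bigr do rewrite mulr_suml.
rewrite exchange_big; apply: eq_bigr => e _; rewrite mulr_sumr.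
by apply: eq_bigr => d _; rewrite mulrA.
Qed.

Lemma apply_Nop m (chi : fvec R n) c : apply_op (Nop m) chi c = (c m)%:R * chi c.
Proof.
rewrite /Nop apply_comp_op apply_Adag; case: ifP => cm; last by rewrite mul0r.
by rewrite apply_Aop set_occE eqxx /= signrMK set_occK ?mul1r.
Qed.

Lemma inner_adj (X : fop R n) phi chi :
  inner phi (apply_op X chi) = inner (apply_op (adj_op X) phi) chi.
Proof.
rewrite /inner /apply_op /adj_op.
under [RHS]eq_bigr => d _ do rewrite rmorph_sum mulr_suml.
rewrite [RHS]exchange_big; apply: eq_bigr => c _; rewrite mulr_sumr.
by apply: eq_bigr => d _; rewrite conjcE rmorphM /= conjCK mulrCA mulrA.
Qed.

Lemma inner_sum_op (I : finType) (F : I -> fop R n) phi psi :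
  inner phi (apply_op (sum_op F) psi) = \sum_i inner phi (apply_op (F i) psi).
Proof.
rewrite /inner /apply_op /sum_op exchange_big; apply: eq_bigr => c _.
rewrite -mulr_sumr exchange_big; congr (_ * _); apply: eq_bigr => d _.
by rewrite mulr_suml.
Qed.

Lemma inner_scale_op a (X : fop R n) phi psi :
  inner phi (apply_op (scale_op a X) psi) = a * inner phi (apply_op X psi).
Proof.
rewrite /inner /apply_op /scale_op mulr_sumr; apply: eq_bigr => c _.
rewrite [RHS]mulrCA; congr (_ * _); rewrite mulr_sumr.
by apply: eq_bigr => d _; rewrite mulrA.
Qed.

Lemma inner_Adag_comp j (Y : fop R n) phi psi :
  inner phi (apply_op (comp_op (Adag j) Y) psi) =
  \sum_e (apply_op (Aop j) phi e)^* * apply_op Y psi e.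
Proof.
transitivity (inner phi (apply_op (Adag j) (apply_op Y psi))).
  by apply: eq_bigr => c _; rewrite apply_comp_op.
by rewrite inner_adj.
Qed.

Lemma inner_sum_AdagNA (c : 'I_n -> 'I_n -> 'I_n -> C) (phi psi : fvec R n) :
  inner phi (apply_op (sum_op (fun jkm : 'I_n * 'I_n * 'I_n =>
      let: (j, k, m) := jkm in
      scale_op (c j k m) (comp_op (Adag j) (comp_op (Nop m) (Aop k))))) psi) =
  \sum_j \sum_k \sum_e (apply_op (Aop j) phi e)^* *
    (\sum_m c j k m * (e m)%:R) * apply_op (Aop k) psi e.
Proof.
transitivity (\sum_j \sum_k \sum_m c j k m *
    inner phi (apply_op (comp_op (Adag j) (comp_op (Nop m) (Aop k))) psi)).
  rewrite inner_sum_op [RHS]pair_bigA [RHS]pair_bigA.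
  by apply: eq_bigr => -[[j k] m] _; rewrite inner_scale_op.
apply: eq_bigr => j _; apply: eq_bigr => k _.
under eq_bigr do rewrite inner_Adag_comp mulr_sumr.
rewrite exchange_big; apply: eq_bigr => e _; rewrite -mulrA mulr_suml mulr_sumr.
by apply: eq_bigr => m _; rewrite apply_comp_op apply_Nop; ring.
Qed.

Lemma inner_sum_AdagA (c : 'I_n -> 'I_n -> C) (phi psi : fvec R n) :
  inner phi (apply_op (sum_op (fun jk : 'I_n * 'I_n =>
      let: (j, k) := jk in scale_op (c j k) (comp_op (Adag j) (Aop k)))) psi) =
  \sum_j \sum_k \sum_e (apply_op (Aop j) phi e)^* * c j k * apply_op (Aop k) psi e.
Proof.
rewrite inner_sum_op [RHS]pair_bigA; apply: eq_bigr => -[j k] _.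
rewrite inner_scale_op inner_Adag_comp mulr_sumr.
by apply: eq_bigr => e _; ring.
Qed.

End FockOperators.

Section ElectronStates.
Variables (R : realType) (n : nat) (eta : nat).
Local Notation C := R[i].

Lemma nelecE (c : config n) : nelec c = #|[set j | c j]|.
Proof. by apply: eq_card => j; rewrite inE /in_mem /= /in_set asboolb. Qed.

Lemma sum_occ (S : pzSemiRingType) (c : config n) : \sum_j (c j)%:R = (nelec c)%:R :> S.
Proof.
rewrite (eq_bigr (fun j => if c j then 1 else 0)) => [|j _]; last by case: (c j).
by rewrite -big_mkcond sumr_const nelecE cardsE.
Qed.

Lemma nelec_set_occ (e : config n) j : ~~ e j -> nelec (set_occ e j true) = (nelec e).+1.
Proof.
move=> ej; rewrite !nelecE (_ : [set k | _] = j |: [set k | e k]) ?cardsU1 ?inE ?ej //.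
by apply/setP => k; rewrite !inE set_occE; case: eqP.
Qed.

Lemma sum_set_occ (V : nmodType) (F : config n -> V) j :
  \sum_(c : config n | c j) F c = \sum_(e : config n | ~~ e j) F (set_occ e j true).
Proof.
rewrite (reindex_onto (fun e => set_occ e j true) (fun c => set_occ c j false)).
  apply: eq_bigl => e; have := eq_set_occ_true (set_occ e j true) e j.
  by rewrite eqxx andbT eq_sym => ->.
by move=> c; apply: set_occK.
Qed.

Lemma eta_state_sum_sqr (phi : fvec R n) :
  eta_state eta phi -> \sum_c cabs (phi c) ^+ 2 = 1.
Proof.
move=> [_ phi1]; apply: complexI; rewrite rmorph_sum /= -[RHS]phi1.
by apply: eq_bigr => c _; rewrite cabs_sqr mulrC.
Qed.

Lemma sum_cabs_Aop_sqr j (phi : fvec R n) :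
  \sum_e cabs (apply_op (Aop j) phi e) ^+ 2 =
  \sum_(c : config n) (c j)%:R * cabs (phi c) ^+ 2.
Proof.
have -> : \sum_(c : config n) (c j)%:R * cabs (phi c) ^+ 2 =
          \sum_(c : config n | c j) cabs (phi c) ^+ 2.
  by rewrite [RHS]big_mkcond; apply: eq_bigr => c _; case: (c j); rewrite ?mul1r ?mul0r.
rewrite sum_set_occ [RHS]big_mkcond; apply: eq_bigr => e _.
by rewrite apply_Aop; case: (e j); rewrite ?cabs0 ?expr0n ?cabsM ?cabs_sign ?mul1r.
Qed.

Lemma sum_number (phi : fvec R n) : eta_state eta phi ->
  \sum_j \sum_e cabs (apply_op (Aop j) phi e) ^+ 2 = eta%:R.
Proof.
move=> phi_eta; under eq_bigr do rewrite sum_cabs_Aop_sqr.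
transitivity (eta%:R * \sum_c cabs (phi c) ^+ 2).
  rewrite exchange_big mulr_sumr; apply: eq_bigr => c _; rewrite -mulr_suml sum_occ.
  by have [->|/phi_eta.1 ->] := eqVneq (nelec c) eta; rewrite // cabs0 expr0n !mulr0.
by rewrite (eta_state_sum_sqr phi_eta) mulr1.
Qed.

Lemma Aop_support (phi : fvec R n) j e : eta_state eta phi ->
  apply_op (Aop j) phi e != 0 -> (nelec e < eta)%N.
Proof.
move=> phi_eta; rewrite apply_Aop; case: (boolP (e j)) => ej; first by rewrite eqxx.
rewrite mulf_eq0 negb_or => /andP[_]; rewrite -(nelec_set_occ ej).
by have [->|/phi_eta.1 ->] := eqVneq (nelec (set_occ e j true)) eta; rewrite ?eqxx.
Qed.

Lemma cabs_occ_weight_le (w : 'I_n -> C) M (e : config n) :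
  (forall m, cabs (w m) <= M) -> cabs (\sum_m w m * (e m)%:R) <= M * (nelec e)%:R.
Proof.
move=> w_le; apply: le_trans (cabs_sum _) _.
rewrite -sum_occ mulr_sumr; apply: ler_sum => m _.
by case: (e m); rewrite ?mulr1 ?mulr0 ?cabs0.
Qed.

End ElectronStates.

Section HoppingBounds.
Variables (R : realType) (n : nat) (tau : 'M[R[i]]_n) (eta : nat).
Local Notation C := R[i].

Lemma cabs_weight_Aop_le (phi : fvec R n) (p : 'I_n -> config n -> C) P j e :
  eta_state eta phi -> (forall j e, (nelec e < eta)%N -> cabs (p j e) <= P) ->
  cabs (p j e * apply_op (Aop j) phi e) <= P * cabs (apply_op (Aop j) phi e).
Proof.
move=> phi_eta p_le; rewrite cabsM.
have [->|Aphi_neq0] := eqVneq (apply_op (Aop j) phi e) 0; first by rewrite cabs0 !mulr0.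
by rewrite ler_wpM2r ?cabs_ge0 ?p_le ?(Aop_support phi_eta Aphi_neq0).
Qed.

Lemma sqrt_sum_vnorm2_le (phi : fvec R n) (W : config n -> 'cV[C]_n) P :
  eta_state eta phi -> 0 <= P ->
  (forall e j, cabs (W e j 0) <= P * cabs (apply_op (Aop j) phi e)) ->
  Num.sqrt (\sum_e vnorm2 (W e) ^+ 2) <= P * Num.sqrt eta%:R.
Proof.
move=> phi_eta P0 W_le.
rewrite -[P]ger0_norm // -sqrtr_sqr -sqrtrM ?sqr_ge0 // ler_wsqrtr //.
rewrite -(sum_number phi_eta) exchange_big mulr_sumr; apply: ler_sum => e _.
rewrite vnorm2_sqr mulr_sumr; apply: ler_sum => j _.
by rewrite -exprMn lerXn2r ?nnegrE ?mulr_ge0 ?cabs_ge0 ?W_le.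
Qed.

Lemma cabs_hopping_le (phi psi : fvec R n) (p q : 'I_n -> config n -> C) P Q :
  eta_state eta phi -> eta_state eta psi -> 0 <= P -> 0 <= Q ->
  (forall j e, (nelec e < eta)%N -> cabs (p j e) <= P) ->
  (forall k e, (nelec e < eta)%N -> cabs (q k e) <= Q) ->
  cabs (\sum_j \sum_k \sum_e (apply_op (Aop j) phi e)^* *
          (p j e * tau j k * q k e) * apply_op (Aop k) psi e)
    <= spec_norm tau * (P * Q) * eta%:R.
Proof.
move=> phi_eta psi_eta P0 Q0 p_le q_le.
pose U e : 'cV[C]_n := \col_j ((p j e)^* * apply_op (Aop j) phi e).
pose V e : 'cV[C]_n := \col_k (q k e * apply_op (Aop k) psi e).
have -> : \sum_j \sum_k \sum_e (apply_op (Aop j) phi e)^* *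
          (p j e * tau j k * q k e) * apply_op (Aop k) psi e =
        \sum_e \sum_j (U e j 0)^* * (tau *m V e) j 0.
  under eq_bigr do rewrite exchange_big.
  rewrite exchange_big; apply: eq_bigr => e _; apply: eq_bigr => j _.
  rewrite !mxE mulr_sumr; apply: eq_bigr => k _.
  by rewrite mxE rmorphM /= conjCK; ring.
apply: le_trans (cabs_dot_mulmx_le _ _ _) _.
rewrite -mulrA ler_wpM2l ?spec_norm_ge0 //.
rewrite -[eta%:R](@sqr_sqrtr _ eta%:R) ?ler0n // expr2 mulrACA.
apply: ler_pM; rewrite ?sqrtr_ge0 //.
  apply: (sqrt_sum_vnorm2_le phi_eta P0) => e j; rewrite mxE cabsM cabsJ -cabsM.
  exact: cabs_weight_Aop_le.
apply: (sqrt_sum_vnorm2_le psi_eta Q0) => e j; rewrite mxE.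
exact: cabs_weight_Aop_le.
Qed.

Lemma eta_norm_le (X : fop R n) (b : R) : 0 <= b ->
  (forall phi psi, eta_state eta phi -> eta_state eta psi ->
     cabs (inner phi (apply_op X psi)) <= b) ->
  eta_norm X eta <= b.
Proof.
move=> b0 X_le; apply: ge0_ge_sup => // _ [phi [psi [phi_eta psi_eta ->]]].
exact: X_le.
Qed.

Lemma eta_norm_hopping_le (X : fop R n) (p q : 'I_n -> config n -> C) P Q :
  0 <= P -> 0 <= Q ->
  (forall j e, (nelec e < eta)%N -> cabs (p j e) <= P) ->
  (forall k e, (nelec e < eta)%N -> cabs (q k e) <= Q) ->
  (forall phi psi, inner phi (apply_op X psi) =
     \sum_j \sum_k \sum_e (apply_op (Aop j) phi e)^* *
       (p j e * tau j k * q k e) * apply_op (Aop k) psi e) ->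
  eta_norm X eta <= spec_norm tau * (P * Q) * eta%:R.
Proof.
move=> P0 Q0 p_le q_le X_hop.
apply: eta_norm_le => [|phi psi phi_eta psi_eta].
  by rewrite !mulr_ge0 ?spec_norm_ge0.
by rewrite X_hop; apply: cabs_hopping_le.
Qed.

Section Weights.
Variables (M : R) (M0 : 0 <= M).

Lemma occ_weight_le (w : 'I_n -> C) (e : config n) :
  (forall m, cabs (w m) <= M) -> (nelec e < eta)%N ->
  cabs (\sum_m w m * (e m)%:R) <= M * eta%:R.
Proof.
move=> w_le /ltnW e_le; apply: le_trans (cabs_occ_weight_le e w_le) _.
by rewrite ler_wpM2l // ler_nat.
Qed.

Lemma eta_norm_AdagNA_right_le (w : 'I_n -> 'I_n -> C) :
  (forall k m, cabs (w k m) <= M) ->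
  eta_norm (sum_op (fun jkm : 'I_n * 'I_n * 'I_n =>
      let: (j, k, m) := jkm in
      scale_op (tau j k * w k m) (comp_op (Adag j) (comp_op (Nop m) (Aop k))))) eta
    <= spec_norm tau * M * (eta ^ 2)%:R.
Proof.
move=> w_le; apply: le_trans (eta_norm_hopping_le (p := fun _ _ => 1)
  (q := fun k e => \sum_m w k m * (e m)%:R) (P := 1) (Q := M * eta%:R) _ _ _ _ _) _.
- exact: ler01.
- exact: mulr_ge0.
- by move=> j e _; rewrite cabs1.
- by move=> k e; apply: occ_weight_le.
- move=> phi psi; rewrite inner_sum_AdagNA.
  do 3!apply: eq_bigr => ? _; rewrite mul1r mulr_sumr.
  by congr (_ * _ * _); apply: eq_bigr => m _; rewrite mulrA.
- by rewrite mul1r natrX expr2 !mulrA.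
Qed.

Lemma eta_norm_AdagNA_left_le (w : 'I_n -> 'I_n -> C) :
  (forall j m, cabs (w j m) <= M) ->
  eta_norm (sum_op (fun jkm : 'I_n * 'I_n * 'I_n =>
      let: (j, k, m) := jkm in
      scale_op (tau j k * w j m) (comp_op (Adag j) (comp_op (Nop m) (Aop k))))) eta
    <= spec_norm tau * M * (eta ^ 2)%:R.
Proof.
move=> w_le; apply: le_trans (eta_norm_hopping_le
  (p := fun j e => \sum_m w j m * (e m)%:R) (q := fun _ _ => 1)
  (P := M * eta%:R) (Q := 1) _ _ _ _ _) _.
- exact: mulr_ge0.
- exact: ler01.
- by move=> j e; apply: occ_weight_le.
- by move=> k e _; rewrite cabs1.
- move=> phi psi; rewrite inner_sum_AdagNA.
  do 3!apply: eq_bigr => ? _; rewrite mulr1 mulr_suml.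
  by congr (_ * _ * _); apply: eq_bigr => m _; ring.
- by rewrite mulr1 natrX expr2 !mulrA.
Qed.

Lemma eta_norm_AdagA_right_le (w : 'I_n -> C) :
  (forall k, cabs (w k) <= M) ->
  eta_norm (sum_op (fun jk : 'I_n * 'I_n =>
      let: (j, k) := jk in scale_op (tau j k * w k) (comp_op (Adag j) (Aop k)))) eta
    <= spec_norm tau * M * eta%:R.
Proof.
move=> w_le; rewrite -[M]mul1r.
apply: (eta_norm_hopping_le (p := fun _ _ => 1) (q := fun k _ => w k)) => //.
- by move=> j e _; rewrite cabs1.
- by move=> phi psi; rewrite inner_sum_AdagA; do 3!apply: eq_bigr => ? _; rewrite mul1r.
Qed.

Lemma eta_norm_AdagA_left_le (w : 'I_n -> C) :
  (forall j, cabs (w j) <= M) ->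
  eta_norm (sum_op (fun jk : 'I_n * 'I_n =>
      let: (j, k) := jk in scale_op (tau j k * w j) (comp_op (Adag j) (Aop k)))) eta
    <= spec_norm tau * M * eta%:R.
Proof.
move=> w_le; rewrite -[M]mulr1.
apply: (eta_norm_hopping_le (p := fun j _ => w j) (q := fun _ _ => 1)) => //.
- by move=> k e _; rewrite cabs1.
- move=> phi psi; rewrite inner_sum_AdagA.
  by do 3!apply: eq_bigr => ? _; ring.
Qed.

End Weights.

End HoppingBounds.

Unset Implicit Arguments.
Theorem proposition8 (R : realType) (n : nat) (tau nu : 'M[R[i]]_n)
    (eta : nat) (heta : (eta <= n)%N) :
  let B := spec_norm tau * max_norm nu in
  (* 1 *)
      eta_norm (sum_op (fun jkm : 'I_n * 'I_n * 'I_n =>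
          let: (j, k, m) := jkm in
          scale_op (tau j k * nu k m)
            (comp_op (Adag j) (comp_op (Nop m) (Aop k))))) eta
        <= B * (eta ^ 2)%:R /\
      (* 2 *)
      eta_norm (sum_op (fun jk : 'I_n * 'I_n =>
          let: (j, k) := jk in
          scale_op (tau j k * nu k k) (comp_op (Adag j) (Aop k)))) eta
        <= B * eta%:R /\
      (* 3 *)
      eta_norm (sum_op (fun jkl : 'I_n * 'I_n * 'I_n =>
          let: (j, k, l) := jkl in
          scale_op (tau j k * nu l k)
            (comp_op (Adag j) (comp_op (Nop l) (Aop k))))) eta
        <= B * (eta ^ 2)%:R /\
      (* 4 *)
      eta_norm (sum_op (fun jkm : 'I_n * 'I_n * 'I_n =>
          let: (j, k, m) := jkm in
          scale_op (tau j k * nu j m)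
            (comp_op (Adag j) (comp_op (Nop m) (Aop k))))) eta
        <= B * (eta ^ 2)%:R /\
      (* 5 *)
      eta_norm (sum_op (fun jk : 'I_n * 'I_n =>
          let: (j, k) := jk in
          scale_op (tau j k * nu j j) (comp_op (Adag j) (Aop k)))) eta
        <= B * eta%:R /\
      (* 6 *)
      eta_norm (sum_op (fun jkl : 'I_n * 'I_n * 'I_n =>
          let: (j, k, l) := jkl in
          scale_op (tau j k * nu l j)
            (comp_op (Adag j) (comp_op (Nop l) (Aop k))))) eta
        <= B * (eta ^ 2)%:R.
Proof.
move=> B; have M0 := max_norm_ge0 nu; have nu_le := max_norm_ge nu.
split; [|split; [|split; [|split; [|split]]]].
- exact: (eta_norm_AdagNA_right_le tau eta M0 nu_le).
- exact: (eta_norm_AdagA_right_le tau eta M0 (fun k => nu_le k k)).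
- exact: (eta_norm_AdagNA_right_le tau eta M0 (fun k l => nu_le l k)).
- exact: (eta_norm_AdagNA_left_le tau eta M0 nu_le).
- exact: (eta_norm_AdagA_left_le tau eta M0 (fun j => nu_le j j)).
- exact: (eta_norm_AdagNA_left_le tau eta M0 (fun j l => nu_le l j)).
Qed.
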